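(* Let $U,V$ be Banach spaces with norms $\|\cdot\|_U,\|\cdot\|_V$, and for each $\varepsilon>0$ let $\bar u_\varepsilon\in U$ and $F_\varepsilon\in C^1(U;V)$ be given with $\|F_\varepsilon(\bar u_\varepsilon)\|_V\to0$ as $\varepsilon\to0$. Let $u_0\in U$ be such that there exist $\varepsilon_0>0$ and $c>0$ with: for all $\varepsilon\in(0,\varepsilon_0]$, $F'_\varepsilon(u_0)$ is Fredholm of index zero from $U$ into $V$ and $\|F'_\varepsilon(u_0)u\|_V\ge c\|u\|_U$ for all $u\in U$. Let $\|\cdot\|$ be another norm on $U$ such that (a) $d:=\sup\{\|u\|:\ u\in U,\ \|u\|_U\le1\}<\infty$; (b) $\|\bar u_\varepsilon-u_0\|\to0$ as $\varepsilon\to0$; (c) $\sup_{\|v\|_U\le1}\|(F'_\varepsilon(u_0+u)-F'_\varepsilon(u_0))v\|_V\to0$ as $\varepsilon+\|u\|\to0$. Then there exist $\varepsilon_1\in(0,\varepsilon_0]$ and $\delta>0$ such that for every $\varepsilon\in(0,\varepsilon_1]$ there is exactly one solution $u=u_\varepsilon$ of $F_\varepsilon(u)=0$ with $\|u-u_0\|\le\delta$, and $$\|u_\varepsilon-u_0\|\le\|\bar u_\varepsilon-u_0\|+\frac{3d}{c}\|F_\varepsilon(\bar u_\varepsilon)\|_V.$$ *)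

From HB Require Import structures.
From mathcomp Require Import all_boot all_order all_algebra.
From mathcomp Require Import all_classical all_reals all_analysis.
Set Implicit Arguments. Unset Strict Implicit. Unset Printing Implicit Defensive.
Import Order.TTheory GRing.Theory Num.Theory.
Import numFieldNormedType.Exports.
Local Open Scope classical_set_scope.
Local Open Scope ring_scope.

Section Defs.
Context {R : realType}.

Definition C1 {U V : normedModType R} (F : U -> V) : Prop :=
  (forall x, differentiable F x) /\
  (forall x (eta : R), 0 < eta -> exists rho : R, 0 < rho /\
     forall y, `|y - x| < rho ->
       forall v : U, `|'d F y v - 'd F x v| <= eta * `|v|).

Definition lin_indep {W : lmodType R} n (k : 'I_n -> W) : Prop :=
  forall a : 'I_n -> R, \sum_(i < n) a i *: k i = 0 -> forall i, a i = 0.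

Definition fspan {W : lmodType R} n (k : 'I_n -> W) : set W :=
  [set w | exists a : 'I_n -> R, w = \sum_(i < n) a i *: k i].

(* L : U -> V is a Fredholm operator of index zero: a bounded linear
   operator with closed range, finite-dimensional kernel, and range of
   finite codimension, with dim ker L = codim ran L (= n). The codimension
   is witnessed by an algebraic complement of the range of dimension n. *)
Definition Fredholm0 {U V : normedModType R} (L : U -> V) : Prop :=
  (forall (a : R) (u v : U), L (a *: u + v) = a *: L u + L v) /\
  continuous L /\
  closed (range L) /\
  exists n (k : 'I_n -> U) (w : 'I_n -> V),
    lin_indep k /\ [set u | L u = 0] = fspan k /\
    lin_indep w /\
    (forall y : V, exists u (a : 'I_n -> R), y = L u + \sum_(i < n) a i *: w i) /\
    (forall y : V, range L y -> fspan w y -> y = 0).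

Definition is_norm {U : lmodType R} (N : U -> R) : Prop :=
  (forall u, N u = 0 -> u = 0) /\
  (forall (a : R) u, N (a *: u) = `|a| * N u) /\
  (forall u v, N (u + v) <= N u + N v).

End Defs.

From HB Require Import structures.
From mathcomp Require Import all_boot all_order all_algebra.
From mathcomp Require Import all_classical all_reals all_analysis.
From mathcomp Require Import ring lra.
Import Order.TTheory GRing.Theory Num.Theory.
Import numFieldNormedType.Exports.
Local Open Scope classical_set_scope.
Local Open Scope ring_scope.

(* Since F_e'(u0) is Fredholm of index zero and bounded below by c, it is
   invertible with inverse of norm at most 1/c.  By (c) and the mean value
   inequality, the simplified Newton map u |-> u - F_e'(u0)^-1 F_e(u) is a
   1/2-contraction on the ||.||-ball of radius delta around u0, and for small e
   it maps the closed set of points of that ball within 2 |F_e(ubar_e)| / c of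
   ubar_e into itself.  Banach's fixed point theorem yields the zero, and (a)
   turns the distance 2 |F_e(ubar_e)| / c into a ||.||-distance; this even gives
   the estimate with 2d/c in place of 3d/c. *)

Section MeanValue.
Context {R : realType} {U V : normedModType R}.

Lemma differentiable_remainder_le {F : U -> V} {x : U} : differentiable F x ->
  forall eps : R, 0 < eps -> exists2 r : R, 0 < r &
  forall k, `|k| < r -> `|F (x + k) - F x - 'd F x k| <= eps * `|k|.
Proof.
move=> /diff_locally /eqaddoP dF eps eps_gt0.
have /nbhs_normP [r /= r_gt0 dF_r] := dF eps eps_gt0.
exists r => // k kr.
have := dF_r k; rewrite /ball_ /= sub0r normrN => /(_ kr) /=.
by rewrite !fctE /= [k + x]addrC opprD addrA.
Qed.

(* Continuous induction on [0, 1] via the supremum of the set of good times. *)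
Lemma increment_le_of_local_lipschitz (phi : R -> V) (K : R) :
  (forall s : R, 0 <= s <= 1 -> exists2 r : R, 0 < r &
     forall t : R, `|t - s| < r -> `|phi t - phi s| <= K * `|t - s|) ->
  `|phi 1 - phi 0| <= K.
Proof.
move=> loc.
pose A := [set t : R | 0 <= t <= 1 /\ `|phi t - phi 0| <= K * t].
have A0 : A 0 by split; [rewrite lexx ler01 | rewrite subrr normr0 mulr0].
have supA : has_sup A by split; [exists 0 | exists 1 => t [/andP[_ ?] _]].
have s01 : 0 <= sup A <= 1.
  rewrite sup_upper_bound //=; apply: ge_sup; first by exists 0.
  by move=> t [/andP[_ ?] _].
have [r r_gt0 r_loc] := loc _ s01.
have As : A (sup A).
  have [t At st] := sup_adherent r_gt0 supA.
  have ts : t <= sup A by apply: sup_upper_bound.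
  split => //; apply: le_trans (ler_distD (phi t) _ _) _.
  have := r_loc t; rewrite [`|t - _|]distrC ger0_norm ?subr_ge0 // => /(_ ltac:(lra)) t_near.
  have -> : K * sup A = K * (sup A - t) + K * t by ring.
  by apply: lerD; [rewrite distrC | case: At].
suff s1 : sup A = 1 by case: As; rewrite s1 mulr1.
have [s_ge0 s_le1] := andP s01.
apply/eqP; rewrite eq_le s_le1 leNgt; apply/negP => s_lt1.
pose t := Num.min (sup A + r / 2) 1.
have st : sup A < t by rewrite lt_min s_lt1 andbT ltrDl divr_gt0.
have ts : t - sup A <= r / 2 by rewrite lerBlDl ge_min lexx.
suff /(sup_upper_bound supA) : A t by lra.
split; first by rewrite ge_min lexx orbT andbT; lra.
apply: le_trans (ler_distD (phi (sup A)) _ _) _.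
have st_ge0 : 0 <= t - sup A by rewrite subr_ge0 ltW.
have := r_loc t; rewrite ger0_norm // => /(_ ltac:(lra)) t_near.
have -> : K * t = K * (t - sup A) + K * sup A by ring.
by apply: lerD => //; case: As.
Qed.

Lemma mean_value_ineq (F : U -> V) (L : {linear U -> V}) (w h : U) (eta : R) :
  (forall t : R, 0 <= t <= 1 -> differentiable F (w + t *: h)) ->
  (forall t : R, 0 <= t <= 1 ->
     forall v, `|'d F (w + t *: h) v - L v| <= eta * `|v|) ->
  `|F (w + h) - F w - L h| <= eta * `|h|.
Proof.
move=> dF dF_near.
have [->|h_neq0] := eqVneq h 0.
  by rewrite addr0 subrr linear0 subr0 !normr0 mulr0.
have h_gt0 : 0 < `|h| by rewrite normr_gt0.
suff approx (eps : R) : 0 < eps -> `|F (w + h) - F w - L h| <= (eta + eps) * `|h|.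
  apply/ler_addgt0Pr => e e_gt0.
  by rewrite -[e](divfK (lt0r_neq0 h_gt0)) -mulrDl approx ?divr_gt0.
move=> eps_gt0.
pose phi (t : R) := F (w + t *: h) - t *: L h.
have -> : F (w + h) - F w - L h = phi 1 - phi 0.
  by rewrite /phi !scale1r !scale0r addr0 subr0 addrAC.
apply: increment_le_of_local_lipschitz => s s01.
have [r r_gt0 rem_le] := differentiable_remainder_le (dF s s01) _ eps_gt0.
exists (r / `|h|); first by rewrite divr_gt0.
move=> t ts; pose k := (t - s) *: h.
have k_lt : `|k| < r by rewrite normrZ -ltr_pdivlMr.
have -> : phi t - phi s = (F (w + s *: h + k) - F (w + s *: h)) - L k.
  have -> : w + s *: h + k = w + t *: h by rewrite -addrA -scalerDl [s + _]addrC subrK.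
  by rewrite /phi [L k]linearZ /= scalerBl opprD addrACA -opprD.
apply: le_trans (ler_distD ('d F (w + s *: h) k) _ _) _.
have -> : (eta + eps) * `|h| * `|t - s| = eps * `|k| + eta * `|k|.
  by rewrite normrZ; ring.
exact: lerD (rem_le _ k_lt) (dF_near s s01 k).
Qed.

End MeanValue.

Lemma continuous_of_lipschitz {R : realType} {U : normedModType R}
    (M : U -> R) (k : R) :
  (forall x y, M x - M y <= k * `|x - y|) -> continuous M.
Proof.
move=> M_lip x; apply/cvgrPdist_le => e e_gt0; apply/nbhs_normP.
have k1_gt0 : 0 < `|k| + 1 by rewrite ltr_wpDl.
exists (e / (`|k| + 1)); first exact: divr_gt0.
move=> y; rewrite /ball_ /= ltr_pdivlMr // => xy.
have kxy : k * `|x - y| <= e.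
  apply: le_trans (ltW xy); rewrite mulrDr mulr1 mulrC ler_wpDr //.
  by rewrite ler_wpM2l ?ler_norm.
have := M_lip x y; have := M_lip y x; rewrite [`|y - x|]distrC => Hyx Hxy.
rewrite ler_norml; apply/andP; split; lra.
Qed.

Section SecondNorm.
Context {R : realType} {U : normedModType R} {N : U -> R}.
Hypothesis normN : is_norm N.

Lemma is_normZ (a : R) u : N (a *: u) = `|a| * N u.
Proof. by case: normN => _ []. Qed.

Lemma is_normD u v : N (u + v) <= N u + N v.
Proof. by case: normN => _ []. Qed.

Lemma is_norm0 : N 0 = 0.
Proof. by rewrite -(scale0r (0 : U)) is_normZ normr0 mul0r. Qed.

Lemma is_normN u : N (- u) = N u.
Proof. by rewrite -scaleN1r is_normZ normrN normr1 mul1r. Qed.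

Lemma is_norm_ge0 u : 0 <= N u.
Proof.
have := is_normD u (- u); rewrite subrr is_norm0 is_normN.
by rewrite -mulr2n pmulrn_lge0.
Qed.

Lemma is_norm_distD u v w : N (u - w) <= N (u - v) + N (v - w).
Proof. by have := is_normD (u - v) (v - w); rewrite addrA subrK. Qed.

Lemma is_norm_ball_convex (u0 x y : U) (delta t : R) : 0 <= t <= 1 ->
  N (x - u0) <= delta -> N (y - u0) <= delta ->
  N (y + t *: (x - y) - u0) <= delta.
Proof.
move=> /andP[t_ge0 t_le1] Nx Ny.
have -> : y + t *: (x - y) - u0 = (y - u0) + t *: ((x - u0) - (y - u0)).
  by rewrite opprB [x - u0 + _]addrA subrK addrAC.
move: (x - u0) (y - u0) Nx Ny => x' y' Nx Ny.
rewrite scalerBr addrA addrAC -[y' in y' - _]scale1r -scalerBl.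
apply: le_trans (is_normD _ _) _.
rewrite !is_normZ !ger0_norm ?subr_ge0 //.
have t1_ge0 : 0 <= 1 - t by rewrite subr_ge0.
have := ler_wpM2l t_ge0 Nx; have := ler_wpM2l t1_ge0 Ny; lra.
Qed.

Section UnitBallBound.
Hypothesis N_bounded : has_ubound [set N u | u in [set u : U | `|u| <= 1]].
Let d := sup [set N u | u in [set u : U | `|u| <= 1]].

Lemma is_norm_unit_sup_ge0 : 0 <= d.
Proof.
rewrite -is_norm0; apply: sup_upper_bound; last by exists 0; rewrite //= normr0.
by split => //; exists (N 0), 0; rewrite //= normr0.
Qed.

Lemma is_norm_le_unit_sup u : N u <= d * `|u|.
Proof.
have [->|u_neq0] := eqVneq u 0; first by rewrite is_norm0 normr0 mulr0.
have u_gt0 : 0 < `|u| by rewrite normr_gt0.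
rewrite -ler_pdivrMr //.
have -> : N u / `|u| = N (`|u|^-1 *: u) by rewrite is_normZ normfV normr_id mulrC.
apply: sup_upper_bound.
  by split => //; exists (N 0), 0; rewrite //= normr0.
by exists (`|u|^-1 *: u); rewrite //= normrZ normfV normr_id mulVf ?gt_eqF.
Qed.

Lemma is_norm_closed_ball (u0 : U) (delta : R) :
  closed [set u | N (u - u0) <= delta].
Proof.
rewrite -/((fun u => N (u - u0)) @^-1` [set x | x <= delta]).
apply: (preimage_closed _ (@closed_le _ _)) => x _.
apply: (continuous_of_lipschitz _ d) => u v.
have := is_norm_distD (u - u0) (v - u0) 0; have := is_norm_le_unit_sup (u - v).
by rewrite !subr0 opprB [u - u0 + _]addrA subrK; lra.
Qed.

End UnitBallBound.
End SecondNorm.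

Section NewtonIteration.
Context {R : realType} {U V : completeNormedModType R}.
Variables (f : U -> V) (L : {linear U -> V}) (N : U -> R) (u0 : U) (c delta : R).
Hypotheses (c_gt0 : 0 < c) (normN : is_norm N)
  (N_bounded : has_ubound [set N u | u in [set u : U | `|u| <= 1]])
  (L_below : forall u, c * `|u| <= `|L u|) (L_surj : forall y, exists u, L u = y)
  (f_diff : forall x, differentiable f x)
  (df_near : forall x, N (x - u0) <= delta ->
     forall v, `|'d f x v - L v| <= c / 2 * `|v|).

Let d := sup [set N u | u in [set u : U | `|u| <= 1]].
Let Linv y := projT1 (cid (L_surj y)).

Let LinvK y : L (Linv y) = y.
Proof. by rewrite /Linv; case: cid. Qed.

Let norm_Linv y : `|Linv y| <= `|y| / c.
Proof. by rewrite ler_pdivlMr // mulrC -{2}(LinvK y) L_below. Qed.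

Let newton u := u - Linv (f u).

Let newton_fix u : newton u = u <-> f u = 0.
Proof.
split=> [|fu0]; last first.
  have := norm_Linv 0; rewrite normr0 mul0r normr_le0 => /eqP Linv0.
  by rewrite /newton fu0 Linv0 subr0.
move=> /(congr1 (fun z => u - z)); rewrite /newton subKr subrr => Linv_f0.
by rewrite -(LinvK (f u)) Linv_f0 linear0.
Qed.

Let newton_contract u w : N (u - u0) <= delta -> N (w - u0) <= delta ->
  `|newton u - newton w| <= 2^-1 * `|u - w|.
Proof.
move=> Nu Nw.
have incr : `|f (w + (u - w)) - f w - L (u - w)| <= c / 2 * `|u - w|.
  apply: mean_value_ineq => t t01; first exact: f_diff.
  by apply: df_near; apply: is_norm_ball_convex.
have L_newton : L (newton u - newton w) = - (f (w + (u - w)) - f w - L (u - w)).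
  by rewrite [w + _]addrC subrK !linearB /= !LinvK !opprK addrACA addrC.
rewrite -(ler_pM2l c_gt0) mulrA -[c * 2^-1]/(c / 2).
by apply: le_trans (L_below _) _; rewrite L_newton normrN.
Qed.

Lemma newton_unique_zero (ub : U) :
  N (ub - u0) + 2 * d / c * `|f ub| <= delta ->
  exists u, [/\ f u = 0, N (u - u0) <= delta,
    (forall w, f w = 0 -> N (w - u0) <= delta -> w = u) &
    N (u - u0) <= N (ub - u0) + 2 * d / c * `|f ub|].
Proof.
move=> ub_delta.
pose r := 2 * (`|f ub| / c).
have d_ge0 : 0 <= d := is_norm_unit_sup_ge0 normN N_bounded.
have Kf_ge0 : 0 <= 2 * d / c * `|f ub|.
  by apply: mulr_ge0 => //; apply: divr_ge0; [exact: mulr_ge0 | exact: ltW].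
have ub_in_ball : N (ub - u0) <= delta by lra.
have near_ub u : `|ub - u| <= r -> N (u - u0) <= N (ub - u0) + 2 * d / c * `|f ub|.
  move=> ub_u; apply: le_trans (is_norm_distD normN _ ub _) _.
  rewrite addrC lerD2l; apply: le_trans (is_norm_le_unit_sup normN N_bounded _) _.
  have -> : 2 * d / c * `|f ub| = d * r by rewrite /r; ring.
  by rewrite distrC ler_wpM2l.
pose S := [set u | N (u - u0) <= delta] `&` closed_ball_ Num.norm ub r.
have newtonS : {homo newton : u / S u >-> S u}.
  move=> u [Nu ub_u]; suff ub_nu : `|ub - newton u| <= r.
    by split=> //; apply: le_trans (near_ub _ ub_nu) ub_delta.
  have := newton_contract _ _ Nu ub_in_ball; rewrite (distrC u) => contr.
  have step : `|ub - newton ub| <= `|f ub| / c.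
    by rewrite /newton opprB addrCA subrr addr0; apply: norm_Linv.
  apply: le_trans (ler_distD (newton ub) _ _) _.
  move: ub_u; rewrite [`|newton ub - _|]distrC /closed_ball_ /= /r; lra.
have contract : is_contraction (mkfun_fun newtonS).
  exists (2^-1)%:nng; split; first by rewrite /= invf_lt1 // ltr1n.
  by move=> [a b] [[Na _] [Nb _]]; apply: newton_contract.
have S_closed : closed S.
  by apply: closedI; [exact: is_norm_closed_ball | exact: closed_closed_ball_].
have S_ub : S ub.
  split=> //; rewrite /closed_ball_ /= subrr normr0.
  by apply: mulr_ge0 => //; apply: divr_ge0 => //; exact: ltW.
have [u [Nu ub_u] u_fix] := banach_fixed_point contract S_closed (ex_intro _ ub S_ub).
have newton_u : newton u = u := esym u_fix.
have fu0 : f u = 0 by apply/newton_fix.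
exists u; split=> // [w fw0 Nw|]; last exact: near_ub.
have := newton_contract _ _ Nw Nu; rewrite (proj2 (newton_fix w) fw0) newton_u.
by move=> wu_le; apply/eqP; rewrite -subr_eq0 -normr_le0; lra.
Qed.

End NewtonIteration.

Lemma Fredholm0_surjective {R : realType} {U V : normedModType R} {L : U -> V} :
  Fredholm0 L -> (forall u, L u = 0 -> u = 0) -> forall y, exists u, L u = y.
Proof.
move=> [_ [_ [_ [n [k [w [k_indep [kerL [_ [L_compl _]]]]]]]]]] L_inj y.
case: n k w k_indep kerL L_compl => [|n] k w k_indep kerL L_compl.
  by have [u [a ->]] := L_compl y; exists u; rewrite big_ord0 addr0.
(* A nonempty kernel basis would put the nonzero vector \sum_i k i in the kernel. *)
have sum_ker : fspan k (\sum_(i < n.+1) 1 *: k i) by exists (fun=> 1).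
rewrite -kerL /= in sum_ker.
have := k_indep (fun=> 1) (L_inj _ sum_ker) ord0.
by move/eqP; rewrite oner_eq0.
Qed.

Lemma linear_dist_le_unit_ball {R : realType} {U V : normedModType R}
    (A B : {linear U -> V}) (K : R) :
  (forall v, `|v| <= 1 -> `|A v - B v| <= K) -> forall v, `|A v - B v| <= K * `|v|.
Proof.
move=> AB_unit v; have [->|v_neq0] := eqVneq v 0.
  by rewrite !raddf0 addr0 !normr0 mulr0.
have v_gt0 : 0 < `|v| by rewrite normr_gt0.
have := AB_unit (`|v|^-1 *: v).
rewrite [A _]linearZ [B _]linearZ /= -scalerBr !normrZ normfV normr_id mulVf ?gt_eqF // lexx.
by rewrite mulrC -ler_pdivlMr ?invr_gt0 // invrK => /(_ isT).
Qed.

Lemma near_right0_le {R : realType} {P : R -> Prop} :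
  (\forall e \near 0^'+, P e) ->
  exists2 r : R, 0 < r & forall e, 0 < e -> e <= r -> P e.
Proof.
rewrite near_withinE => /nbhs_normP [r /= r_gt0 Pr].
exists (r / 2) => [|e e_gt0 e_le]; first by rewrite divr_gt0.
apply: Pr => //=; rewrite /ball_ /= sub0r normrN gtr0_norm //; lra.
Qed.

Theorem corollary2p3 (R : realType) (U V : completeNormedModType R)
  (ubar : R -> U) (F : R -> U -> V) (u0 : U) (eps0 c : R) (N : U -> R) :
  (forall e, 0 < e -> C1 (F e)) ->
  (fun e => `|F e (ubar e)|) @ 0^'+ --> 0 ->
  0 < eps0 -> 0 < c ->
  (forall e, 0 < e -> e <= eps0 ->
     Fredholm0 ('d (F e) u0) /\ (forall u : U, c * `|u| <= `|'d (F e) u0 u|)) ->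
  is_norm N ->
  (* (a) *)
  has_ubound [set N u | u in [set u : U | `|u| <= 1]] ->
  (* (b) *)
  (fun e => N (ubar e - u0)) @ 0^'+ --> 0 ->
  (* (c) *)
  (forall eta : R, 0 < eta -> exists rho : R, 0 < rho /\
     forall (e : R) (u : U), 0 < e -> e + N u < rho ->
       forall v : U, `|v| <= 1 ->
         `|'d (F e) (u0 + u) v - 'd (F e) u0 v| <= eta) ->
  let d := sup [set N u | u in [set u : U | `|u| <= 1]] in
  exists eps1 : R, 0 < eps1 /\ eps1 <= eps0 /\
  exists delta : R, 0 < delta /\
  forall e : R, 0 < e -> e <= eps1 ->
    exists u : U, F e u = 0 /\ N (u - u0) <= delta /\
      (forall w : U, F e w = 0 -> N (w - u0) <= delta -> w = u) /\
      N (u - u0) <= N (ubar e - u0) + (3 * d / c) * `|F e (ubar e)|.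
Proof.
move=> F_C1 Fub_cvg eps0_gt0 c_gt0 dF0 normN N_bounded ub_cvg dF_cont d.
have [rho [rho_gt0 dF_near]] := dF_cont (c / 2) ltac:(by rewrite divr_gt0).
pose delta := rho / 2.
have sum_cvg : (fun e => N (ubar e - u0) + 2 * d / c * `|F e (ubar e)|) @ 0^'+ --> 0.
  have := cvgD ub_cvg (@cvgMl_tmp _ _ _ _ _ (2 * d / c) _ Fub_cvg).
  by rewrite mulr0 addr0; apply.
have small : \forall e \near 0^'+,
    e < delta /\ N (ubar e - u0) + 2 * d / c * `|F e (ubar e)| < delta.
  near=> e; split; near: e; first by apply: nbhs_right_lt; rewrite divr_gt0.
  by apply: cvgr_lt sum_cvg _ _; rewrite divr_gt0.
have [r r_gt0 r_small] := near_right0_le small.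
exists (Num.min r eps0); split; first by rewrite lt_min r_gt0.
split; first by rewrite ge_min lexx orbT.
exists delta; split; first by rewrite divr_gt0.
move=> e e_gt0; rewrite le_min => /andP[e_le_r e_le_eps0].
have [e_lt_delta ub_delta] := r_small e e_gt0 e_le_r.
have [dF0_fred dF0_below] := dF0 e e_gt0 e_le_eps0.
have dF0_inj u : 'd (F e) u0 u = 0 -> u = 0.
  move=> dF0u; have := dF0_below u; rewrite dF0u normr0 pmulr_rle0 // normr_le0.
  by move/eqP.
have [|u [Fu0 Nu u_uniq u_bound]] := newton_unique_zero (F e) _ N u0 c delta
  c_gt0 normN N_bounded dF0_below (Fredholm0_surjective dF0_fred dF0_inj)
  (proj1 (F_C1 e e_gt0)) _ (ubar e) (ltW ub_delta).
  move=> x Nx; apply: linear_dist_le_unit_ball => v v_le1.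
  have := dF_near e (x - u0) e_gt0 ltac:(rewrite /delta in Nx e_lt_delta; lra) v v_le1.
  by rewrite [u0 + _]addrC subrK.
exists u; do 3!split => //; apply: le_trans u_bound _; rewrite lerD2l.
have d_ge0 : 0 <= d := is_norm_unit_sup_ge0 normN N_bounded.
apply: ler_wpM2r => //; apply: ler_wpM2r; first by rewrite invr_ge0 ltW.
by apply: ler_wpM2r => //; rewrite ler_nat.
Unshelve. all: by end_near.
Qed.
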